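(* Let $L$ be a Lie algebra over $\mathbb{C}$ with a countable basis, and let $V_1,V_2$ be $L$-modules. Suppose that one of the following conditions holds: (1) $V_1$ is simple and $\mathrm{ann}_L(v)+\mathrm{ann}_L(S)=L$ for all $v\in V_1$ and all finite subsets $S\subset V_2$; (2) for every finite subset $S\subset V_2$, $V_1$ is a simple $\mathrm{ann}_L(S)$-module. Then (a) every submodule of $V_1\otimes V_2$ is of the form $V_1\otimes V_2'$ for some submodule $V_2'$ of $V_2$; and (b) if $V_1$ and $V_2$ are simple, then $V_1\otimes V_2$ is simple.
   Context: For an $L$-module $V$ and $v\in V$, $\mathrm{ann}_L(v)=\{g\in L\mid gv=0\}$, and for $S\subset V$, $\mathrm{ann}_L(S)=\bigcap_{v\in S}\mathrm{ann}_L(v)$. $V_1\otimes V_2$ carries the usual tensor product $L$-module structure $g(v_1\otimes v_2)=gv_1\otimes v_2+v_1\otimes gv_2$. *)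

From HB Require Import structures.
From mathcomp Require Import all_boot all_algebra.
From mathcomp Require Import complex.
From mathcomp Require Import Rstruct.
Set Implicit Arguments. Unset Strict Implicit. Unset Printing Implicit Defensive.
Import GRing.Theory.
Local Open Scope ring_scope.

Notation CC := (Rdefinitions.R)[i].

Section LieDefs.
Variable F : fieldType.

Definition lincomb (I : Type) (V : lmodType F) (e : I -> V) (c : I -> F)
    (s : seq I) : V := \sum_(i <- s) c i *: e i.

Definition is_basis (I : eqType) (V : lmodType F) (e : I -> V) : Prop :=
  (forall (s : seq I) (c : I -> F), uniq s -> lincomb e c s = 0 ->
      forall i, i \in s -> c i = 0)
  /\ (forall v : V, exists (s : seq I) (c : I -> F), v = lincomb e c s).

Definition has_countable_basis (V : lmodType F) : Prop :=
  exists (I : countType) (e : I -> V), is_basis e.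

Definition bilinear_map (U V W : lmodType F) (b : U -> V -> W) : Prop :=
  (forall (a : F) (u1 u2 : U) (v : V), b (a *: u1 + u2) v = a *: b u1 v + b u2 v)
  /\ (forall (a : F) (u : U) (v1 v2 : V), b u (a *: v1 + v2) = a *: b u v1 + b u v2).

Definition linear_map (U W : lmodType F) (f : U -> W) : Prop :=
  forall (a : F) (u1 u2 : U), f (a *: u1 + u2) = a *: f u1 + f u2.

Definition subspace (V : lmodType F) (W : V -> Prop) : Prop :=
  W 0 /\ (forall (a : F) (x y : V), W x -> W y -> W (a *: x + y)).

Definition lie_bracket (L : lmodType F) (br : L -> L -> L) : Prop :=
  bilinear_map br
  /\ (forall x : L, br x x = 0)
  /\ (forall x y z : L, br x (br y z) + br y (br z x) + br z (br x y) = 0).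

Definition lie_module (L : lmodType F) (br : L -> L -> L)
    (V : lmodType F) (act : L -> V -> V) : Prop :=
  bilinear_map act
  /\ (forall (x y : L) (v : V), act (br x y) v = act x (act y v) - act y (act x v)).

Definition stable (L V : lmodType F) (act : L -> V -> V) (A : L -> Prop)
    (W : V -> Prop) : Prop :=
  forall (g : L) (v : V), A g -> W v -> W (act g v).

Definition submodule (L V : lmodType F) (act : L -> V -> V) (W : V -> Prop) : Prop :=
  subspace W /\ stable act (fun _ => True) W.

Definition simple_over (L V : lmodType F) (act : L -> V -> V) (A : L -> Prop) : Prop :=
  (exists v : V, v != 0)
  /\ (forall W : V -> Prop, subspace W -> stable act A W ->
        (forall v, W v -> v = 0) \/ (forall v, W v)).

Definition simple_module (L V : lmodType F) (act : L -> V -> V) : Prop :=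
  simple_over act (fun _ => True).

Definition ann (L V : lmodType F) (act : L -> V -> V) (v : V) : L -> Prop :=
  fun g => act g v = 0.
Definition ann_set (L V : lmodType F) (act : L -> V -> V) (S : seq V) : L -> Prop :=
  fun g => forall v, v \in S -> act g v = 0.

Definition is_tensor_product (V1 V2 T : lmodType F) (tens : V1 -> V2 -> T) : Prop :=
  bilinear_map tens
  /\ forall (W : lmodType F) (b : V1 -> V2 -> W), bilinear_map b ->
       (exists f : T -> W, linear_map f /\ forall v1 v2, f (tens v1 v2) = b v1 v2)
       /\ (forall f f' : T -> W, linear_map f -> linear_map f' ->
             (forall v1 v2, f (tens v1 v2) = f' (tens v1 v2)) -> forall t, f t = f' t).

Definition tensor_action (L V1 V2 T : lmodType F) (act1 : L -> V1 -> V1)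
    (act2 : L -> V2 -> V2) (tens : V1 -> V2 -> T) (actT : L -> T -> T) : Prop :=
  (forall g : L, linear_map (actT g))
  /\ forall (g : L) (v1 : V1) (v2 : V2),
       actT g (tens v1 v2) = tens (act1 g v1) v2 + tens v1 (act2 g v2).

Definition tensor_sub (V1 V2 T : lmodType F) (tens : V1 -> V2 -> T)
    (V2' : V2 -> Prop) : T -> Prop :=
  fun t => exists s : seq (V1 * V2),
    (forall p, p \in s -> V2' p.2) /\ t = \sum_(p <- s) tens p.1 p.2.

End LieDefs.

From HB Require Import structures.
From mathcomp Require Import all_boot all_order all_algebra.
From mathcomp Require Import complex.
From mathcomp Require Import Rstruct.
From mathcomp Require Import classical_sets cardinality boolp.
From Stdlib Require Import Runcountable.
Import GRing.Theory.
Set Implicit Arguments. Unset Strict Implicit. Unset Printing Implicit Defensive.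
Local Open Scope ring_scope.

(* Condition (1) implies condition (2), so assume (2).  A simple module V1 over a
   Lie algebra of countable dimension has countable dimension, so by Dixmier's lemma
   (C is uncountable) every endomorphism of V1 commuting with ann_L(S) is a scalar,
   and the Jacobson density theorem applies to the ann_L(S)-module V1.  Write a
   tensor t = sum_i v_i (x) w_i of a submodule W with the v_i linearly independent
   and put S = {w_i}: ann_L(S) acts on t through the v_i alone, so by density
   every u (x) w_i lies in W.  Hence W = V1 (x) V2' with
   V2' = {w | V1 (x) w is contained in W}, and (b) follows since V2' is 0 or V2. *)

Section LinearMap.
Variables (F : fieldType) (U W : lmodType F) (f : U -> W).
Hypothesis f_lin : linear_map f.

Lemma linear_map0 : f 0 = 0.
Proof.
have := f_lin 1 0 0; rewrite scaler0 addr0 scale1r => h.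
by apply: (addrI (f 0)); rewrite addr0 -h.
Qed.

Lemma linear_mapD : {morph f : x y / x + y}.
Proof. by move=> x y; have := f_lin 1 x y; rewrite !scale1r. Qed.

Lemma linear_mapZ a : {morph f : x / a *: x}.
Proof. by move=> x; have := f_lin a x 0; rewrite !addr0 linear_map0 addr0. Qed.

Lemma linear_mapN : {morph f : x / - x}.
Proof. by move=> x; rewrite -scaleN1r linear_mapZ scaleN1r. Qed.

Lemma linear_mapB : {morph f : x y / x - y}.
Proof. by move=> x y; rewrite linear_mapD linear_mapN. Qed.

Lemma linear_map_sum (I : Type) (r : seq I) (P : pred I) (G : I -> U) :
  f (\sum_(i <- r | P i) G i) = \sum_(i <- r | P i) f (G i).
Proof. exact: (big_morph f linear_mapD linear_map0). Qed.
End LinearMap.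

Section Subspace.
Variables (F : fieldType) (V : lmodType F) (H : V -> Prop).
Hypothesis H_sub : subspace H.

Lemma subspace0 : H 0. Proof. by case: H_sub. Qed.

Lemma subspaceD x y : H x -> H y -> H (x + y).
Proof. by move=> hx hy; have := H_sub.2 1 x y hx hy; rewrite scale1r. Qed.

Lemma subspaceZ a x : H x -> H (a *: x).
Proof. by move=> hx; have := H_sub.2 a x 0 hx subspace0; rewrite addr0. Qed.

Lemma subspaceN x : H x -> H (- x).
Proof. by move=> hx; rewrite -scaleN1r; apply: subspaceZ. Qed.

Lemma subspaceB x y : H x -> H y -> H (x - y).
Proof. by move=> hx hy; apply: subspaceD => //; apply: subspaceN. Qed.

Lemma subspace_sum (I : Type) (r : seq I) (P : pred I) (G : I -> V) :
  (forall i, P i -> H (G i)) -> H (\sum_(i <- r | P i) G i).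
Proof.
move=> HG; elim: r => [|i r IH]; first by rewrite big_nil; exact: subspace0.
by rewrite big_cons; case: ifP => // Pi; exact: subspaceD (HG _ Pi) IH.
Qed.
End Subspace.

Section LieModule.
Variables (F : fieldType) (L V : lmodType F) (br : L -> L -> L) (act : L -> V -> V).
Hypothesis act_mod : lie_module br act.

Lemma lie_module_linear g : linear_map (act g).
Proof. by move=> a u1 u2; exact: act_mod.1.2. Qed.

Lemma lie_module_linear_l v : linear_map (act^~ v).
Proof. by move=> a g1 g2; exact: act_mod.1.1. Qed.
End LieModule.

Lemma simple_over_sub (F : fieldType) (L V : lmodType F) (act : L -> V -> V)
    (A B : L -> Prop) :
  (forall g, A g -> B g) -> simple_over act A -> simple_over act B.
Proof.
move=> AB [nz simA]; split => // W W_sub W_st; apply: simA => // g v Ag; exact/W_st/AB.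
Qed.

Section Separation.
Local Open Scope classical_set_scope.
Variables (F : fieldType) (V : lmodType F) (U : set V) (w0 : V).
Hypotheses (U_sub : subspace U) (w0_notin : ~ U w0).

Definition avoiding (H : set V) := [/\ subspace H, U `<=` H & ~ H w0].

Lemma maximal_avoiding : exists H, avoiding H /\ forall B, H `<` B -> ~ avoiding B.
Proof.
pose P H := H = set0 \/ avoiding H.
have nonempty_avoiding X : P X -> (exists x, X x) -> avoiding X.
  by case=> [-> [] //|].
have [H [PH Hmax]] : exists H, P H /\ forall B, H `<` B -> ~ P B.
  apply: Zorn_bigcup => C CP Ctot.
  have [[X [CX [x Xx]]]|empty] := pselect (exists X, C X /\ exists x, X x); last first.
    left; apply/seteqP; split => // x [X CX Xx].
    by apply: empty; exists X; split => //; exists x.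
  have [X_sub UX nX] := nonempty_avoiding X (CP X CX) (ex_intro _ x Xx).
  right; split.
  - split; first by exists X => //; exact: subspace0.
    move=> a y z [Y1 C1 Y1y] [Y2 C2 Y2z].
    have [Y1_sub _ _] := nonempty_avoiding Y1 (CP _ C1) (ex_intro _ y Y1y).
    have [Y2_sub _ _] := nonempty_avoiding Y2 (CP _ C2) (ex_intro _ z Y2z).
    case: (Ctot Y1 Y2 C1 C2) => [s12|s21].
      by exists Y2 => //; apply: Y2_sub.2 => //; apply: s12.
    by exists Y1 => //; apply: Y1_sub.2 => //; apply: s21.
  - by move=> u Uu; exists X => //; apply: UX.
  - move=> [Y CY Yw].
    by have [_ _] := nonempty_avoiding Y (CP Y CY) (ex_intro _ w0 Yw); apply.
exists H; split=> [|B HB aB]; last by apply: (Hmax B HB); right.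
case: PH => // H0; exfalso; apply: (Hmax U); last by right; split.
by rewrite H0; split => // /(_ 0 (subspace0 U_sub)).
Qed.

Section Maximal.
Variable H : set V.
Hypotheses (H_avoid : avoiding H) (H_max : forall B, H `<` B -> ~ avoiding B).

Lemma maximal_avoiding_codim1 v : exists a : F, H (v - a *: w0).
Proof.
have [H_sub UH nHw] := H_avoid.
have [Hv|nHv] := pselect (H v); first by exists 0; rewrite scale0r subr0.
pose B x := exists h c, H h /\ x = h + c *: v.
have HB : H `<` B.
  split; first by move=> x Hx; exists x, 0; rewrite scale0r addr0.
  move=> /(_ v) hv; apply: nHv; apply: hv; exists 0, 1; rewrite scale1r add0r.
  by split => //; exact: subspace0.
have [h [c [Hh w0E]]] : B w0.
  apply: contrapT => nB; apply: (H_max HB); split => //.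
    split; first by exists 0, 0; rewrite scale0r addr0; split => //; exact: subspace0.
    move=> a x y [h1 [c1 [h1H ->]]] [h2 [c2 [h2H ->]]].
    exists (a *: h1 + h2), (a * c1 + c2); split; first by apply: H_sub.2.
    by rewrite scalerDr scalerDl scalerA addrACA.
  by move=> u Uu; exists u, 0; rewrite scale0r addr0; split => //; apply: UH.
have c0 : c != 0 by apply/eqP => c0; apply: nHw; rewrite w0E c0 scale0r addr0.
exists c^-1; rewrite w0E scalerDr scalerA mulVf // scale1r opprD addrA addrAC subrr.
by rewrite add0r; apply: subspaceN => //; apply: subspaceZ.
Qed.

Lemma avoiding_coef_unique v a b :
  H (v - a *: w0) -> H (v - b *: w0) -> a = b.
Proof.
have [H_sub _ nHw] := H_avoid.
move=> ha hb; apply/eqP; apply: contraT => nab; exfalso; apply: nHw.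
have -> : w0 = (a - b)^-1 *: (v - b *: w0 - (v - a *: w0)).
  have -> : v - b *: w0 - (v - a *: w0) = (a - b) *: w0.
    by rewrite scalerBl opprB addrC addrA subrK.
  by rewrite scalerA mulVf ?scale1r // subr_eq0.
exact: subspaceZ (subspaceB H_sub hb ha).
Qed.
End Maximal.

Theorem separating_functional : exists phi : V -> F^o,
  [/\ linear_map phi, forall u, U u -> phi u = 0 & phi w0 = 1].
Proof.
have [H [H_avoid H_max]] := maximal_avoiding.
have [H_sub UH _] := H_avoid.
have coef_unique := avoiding_coef_unique H_avoid.
pose phi (v : V) : F^o := proj1_sig (cid (maximal_avoiding_codim1 H_avoid H_max v)).
have phiP v : H (v - (phi v : F) *: w0).
  exact: proj2_sig (cid (maximal_avoiding_codim1 H_avoid H_max v)).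
exists phi; split.
- move=> a u1 u2; apply: (coef_unique (a *: u1 + u2)); first exact: phiP.
  have -> : a *: u1 + u2 - (a *: phi u1 + phi u2 : F^o) *: w0 =
     a *: (u1 - phi u1 *: w0) + (u2 - phi u2 *: w0).
    by rewrite scalerDl -scalerA scalerBr opprD [RHS]addrACA.
  exact: H_sub.2.
- by move=> u Uu; apply: (coef_unique u); rewrite ?scale0r ?subr0; [exact: phiP|exact: UH].
- by apply: (coef_unique w0); rewrite ?scale1r ?subrr; [exact: phiP|exact: subspace0].
Qed.
End Separation.

Section LevelSets.
Local Open Scope classical_set_scope.

Lemma finite_set_of_bounded_uniq (T : eqType) (A : set T) n :
  (forall s, uniq s -> (forall x, x \in s -> A x) -> (size s <= n)%N) -> finite_set A.
Proof.
move=> bounded.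
pose P k := `[< exists s : seq T, [/\ uniq s, forall x, x \in s -> A x & size s = k] >].
have P0 : exists k, P k by exists 0%N; apply/asboolP; exists [::].
have Pb k : P k -> (k <= n)%N by move=> /asboolP [s [us sA <-]]; apply: bounded.
case: (ex_maxnP P0 Pb) => k /asboolP [s [us sA sk]] kmax.
apply/finite_seqP; exists s; apply/seteqP; split => x /=; last exact: sA.
move=> Ax; apply: contraT => xNs.
have : P (size (x :: s)).
  apply/asboolP; exists (x :: s); split => //=; first by rewrite xNs.
  by move=> x'; rewrite inE => /orP [/eqP -> | /sA].
by move/kmax; rewrite /= sk ltnn.
Qed.

(* The cardinality library needs a pointed codomain. *)
HB.instance Definition _ := isPointed.Build Rdefinitions.R 0%R.

Lemma R_not_countable : ~ countable [set: Rdefinitions.R].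
Proof.
move=> cR.
have iR : infinite_set [set: Rdefinitions.R].
  apply/infiniteP/pcard_injP; exists Raxioms.INR => m n _ _; exact: RIneq.INR_eq.
have /pcard_eqP/bijPex [f [_ finj fsurj]] := card_esym (eq_card_nat cR iR).
have hs (r : Rdefinitions.R) : exists m, f m = r by have [m _ <-] := fsurj r I; exists m.
apply: (R_uncountable f); exists (fun r => proj1_sig (cid (hs r))); split.
  move=> m; apply: finj; [exact: mem_set | exact: mem_set |].
  exact: proj2_sig (cid (hs (f m))).
by move=> r; exact: proj2_sig (cid (hs r)).
Qed.

Lemma exists_large_level_set (N : Rdefinitions.R -> nat) :
  exists n (s : seq Rdefinitions.R),
    [/\ uniq s, forall r, r \in s -> (N r <= n)%N & (n < size s)%N].
Proof.
apply: contrapT => small; apply: R_not_countable.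
have -> : [set: Rdefinitions.R] = \bigcup_(n in [set: nat]) [set r | (N r <= n)%N].
  by apply/seteqP; split => r //= _; exists (N r) => //=.
apply: bigcup_countable => // n _; apply/finite_set_countable.
apply: (@finite_set_of_bounded_uniq _ _ n) => s us sN; rewrite leqNgt.
by apply/negP => big; apply: small; exists n, s.
Qed.
End LevelSets.

Definition lin_indep (F : fieldType) (V : lmodType F) n (v : 'I_n -> V) :=
  forall c : 'I_n -> F, \sum_(i < n) c i *: v i = 0 -> forall i, c i = 0.

Section CountableSpan.
Variables (F : fieldType) (V : lmodType F) (y : nat -> V).

Definition nat_span (v : V) := exists l : seq (F * nat), v = \sum_(p <- l) p.1 *: y p.2.

Lemma nat_span_subspace : subspace nat_span.
Proof.
split; first by exists [::]; rewrite big_nil.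
move=> a _ _ [l1 ->] [l2 ->]; exists ([seq (a * p.1, p.2) | p <- l1] ++ l2).
rewrite big_cat big_map scaler_sumr; congr (_ + _).
by apply: eq_bigr => p _; rewrite scalerA.
Qed.

Lemma sum_pairs_ord (l : seq (F * nat)) n : (forall p, p \in l -> (p.2 < n)%N) ->
  \sum_(p <- l) p.1 *: y p.2 = \sum_(i < n) (\sum_(p <- l | p.2 == i) p.1) *: y i.
Proof.
move=> l_lt; transitivity (\sum_(p <- l) \sum_(i < n | p.2 == i :> nat) p.1 *: y i).
  by apply: eq_big_seq => p pl; rewrite (big_pred1 (Ordinal (l_lt p pl))).
under eq_bigr do rewrite big_mkcond; rewrite exchange_big; apply: eq_bigr => i _.
by rewrite scaler_suml [RHS]big_mkcond; apply: eq_bigr => p _; case: eqP.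
Qed.

Lemma more_vectors_than_span_dependent m n (u : 'I_m -> V) (M : 'M[F]_(m, n)) :
  (n < m)%N -> (forall k, u k = \sum_(i < n) M k i *: y i) -> ~ lin_indep u.
Proof.
move=> nm uM u_indep.
have ker_nz : kermx M != 0.
  by rewrite -mxrank_eq0 mxrank_ker subn_eq0 -ltnNge (leq_ltn_trans (rank_leq_col M)).
have [i [j kij]] : exists i j, kermx M i j != 0.
  apply: contrapT => h; move/negP: ker_nz; apply; apply/eqP/matrixP => i j.
  by rewrite [RHS]mxE; apply/eqP; apply: contrapT => kij; apply: h; exists i, j; exact/negP.
pose a := row i (kermx M).
have aM : a *m M = 0 by apply/sub_kermxP; exact: row_sub.
have : \sum_(k < m) a 0 k *: u k = 0.
  transitivity (\sum_(l < n) (a *m M) 0 l *: y l); last first.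
    by rewrite aM; apply: big1 => l _; rewrite mxE scale0r.
  under eq_bigr do rewrite uM scaler_sumr.
  rewrite exchange_big; apply: eq_bigr => l _.
  by rewrite mxE scaler_suml; apply: eq_bigr => k _; rewrite scalerA.
by move/u_indep/(_ j); rewrite mxE; apply/eqP.
Qed.

Hypothesis y_span : forall v, nat_span v.

(* Each x r lies in the span of y_0, ..., y_(N r - 1) for some N r, and some level
   set {N <= n} has more than n elements. *)
Lemma no_real_indexed_lin_indep (x : Rdefinitions.R -> V) :
  ~ (forall s, uniq s -> lin_indep (fun k : 'I_(size s) => x (nth 0%R s k))).
Proof.
move=> x_indep.
pose l r := proj1_sig (cid (y_span (x r))).
have lP r : x r = \sum_(p <- l r) p.1 *: y p.2 by exact: proj2_sig (cid (y_span (x r))).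
have [n [s [us sN ns]]] := exists_large_level_set (fun r => \max_(p <- l r) p.2.+1).
pose M : 'M[F]_(size s, n) := \matrix_(k, i) \sum_(p <- l (nth 0%R s k) | p.2 == i) p.1.
apply: (more_vectors_than_span_dependent (M := M) ns) (x_indep s us) => k.
under eq_bigr do rewrite mxE; rewrite lP; apply: sum_pairs_ord => p pl.
apply: leq_trans (sN _ (mem_nth 0%R (ltn_ord k))).
exact: (@leq_bigmax_seq _ _ xpredT (fun p => p.2.+1) p).
Qed.
End CountableSpan.

Section PolyAction.
Variables (F : fieldType) (V : lmodType F) (phi : V -> V).
Hypothesis phi_lin : linear_map phi.

Definition poly_act (p : {poly F}) (v : V) : V :=
  \sum_(i < size p) p`_i *: iter i phi v.

Lemma poly_act_widen (p : {poly F}) (v : V) n : (size p <= n)%N ->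
  poly_act p v = \sum_(i < n) p`_i *: iter i phi v.
Proof.
move=> pn; rewrite /poly_act (big_ord_widen n (fun i => p`_i *: iter i phi v) pn).
rewrite big_mkcond; apply: eq_bigr => i _; case: ltnP => // le_p_i.
by rewrite nth_default // scale0r.
Qed.

Lemma iter_linear n : linear_map (iter n phi).
Proof. by elim: n => [|n IH] a u1 u2 //=; rewrite IH phi_lin. Qed.

Lemma poly_act_linear p : linear_map (poly_act p).
Proof.
move=> a u1 u2; rewrite /poly_act scaler_sumr -big_split; apply: eq_bigr => i _.
by rewrite iter_linear scalerDr !scalerA mulrC.
Qed.

Lemma poly_actD p q v : poly_act (p + q) v = poly_act p v + poly_act q v.
Proof.
rewrite (poly_act_widen v (size_polyD p q)) (poly_act_widen v (leq_maxl (size p) (size q))).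
rewrite (poly_act_widen v (leq_maxr (size p) (size q))) -big_split.
by apply: eq_bigr => i _; rewrite coefD scalerDl.
Qed.

Lemma poly_actZ c p v : poly_act (c *: p) v = c *: poly_act p v.
Proof.
rewrite (poly_act_widen v (size_scale_leq c p)) /poly_act scaler_sumr.
by apply: eq_bigr => i _; rewrite coefZ scalerA.
Qed.

Lemma poly_act0 v : poly_act 0 v = 0.
Proof. by rewrite /poly_act size_poly0 big_ord0. Qed.

Lemma poly_actB p q v : poly_act (p - q) v = poly_act p v - poly_act q v.
Proof. by rewrite poly_actD -[- q]scaleN1r poly_actZ scaleN1r. Qed.

Lemma poly_act_sum (I : Type) (r : seq I) (P : pred I) (G : I -> {poly F}) v :
  poly_act (\sum_(i <- r | P i) G i) v = \sum_(i <- r | P i) poly_act (G i) v.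
Proof.
exact: (big_morph (poly_act^~ v) (fun p q => poly_actD p q v) (poly_act0 v)).
Qed.

Lemma poly_actC c v : poly_act c%:P v = c *: v.
Proof. by rewrite (poly_act_widen v (size_polyC_leq1 c)) big_ord1 coefC. Qed.

Lemma poly_act_mulX p v : poly_act (p * 'X) v = poly_act p (phi v).
Proof.
have size_pX : (size (p * 'X)%R <= (size p).+1)%N.
  by apply: leq_trans (size_polyMleq p 'X) _; rewrite size_polyX addn2.
rewrite (poly_act_widen v size_pX) big_ord_recl coefMX scale0r add0r.
by apply: eq_bigr => i _; rewrite coefMX /= -iterS iterSr.
Qed.

Lemma poly_act_mulXsubC p c v :
  poly_act (p * ('X - c%:P)) v = poly_act p (phi v - c *: v).
Proof.
rewrite mulrBr poly_actB poly_act_mulX mulrC mul_polyC poly_actZ.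
by rewrite (linear_mapB (poly_act_linear p)) (linear_mapZ (poly_act_linear p)).
Qed.

End PolyAction.

Lemma poly_act_inj (F : closedFieldType) (V : lmodType F) (phi : V -> V) :
  linear_map phi -> (forall c v, phi v - c *: v = 0 -> v = 0) ->
  forall p v, p != 0 -> poly_act phi p v = 0 -> v = 0.
Proof.
move=> phi_lin shift_inj p v p0; have [r ->] := closed_field_poly_normal p.
rewrite poly_actZ => /eqP; rewrite scaler_eq0 lead_coef_eq0 (negbTE p0) => /eqP.
elim: r v => [|z r IH] v; first by rewrite big_nil -polyC1 poly_actC scale1r.
by rewrite big_cons mulrC poly_act_mulXsubC // => /IH; exact: shift_inj.
Qed.

Lemma resolvents_lin_indep (F : closedFieldType) (V : lmodType F) (phi : V -> V)
    (v0 : V) (x : F -> V) :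
  linear_map phi -> (forall c v, phi v - c *: v = 0 -> v = 0) -> v0 != 0 ->
  (forall c, phi (x c) - c *: x c = v0) ->
  forall m (z : 'I_m -> F), injective z -> lin_indep (fun k => x (z k)).
Proof.
move=> phi_lin shift_inj v0_nz xP m z z_inj a sum0.
pose Qk k := \prod_(j < m | j != k) ('X - (z j)%:P).
pose Q := \prod_(j < m) ('X - (z j)%:P).
have QE k : Q = Qk k * ('X - (z k)%:P) by rewrite /Q (bigD1 k) //= mulrC.
have Q_lin := poly_act_linear phi_lin Q.
have act0 : poly_act phi (\sum_(k < m) a k *: Qk k) v0 = 0.
  rewrite poly_act_sum; transitivity (poly_act phi Q (\sum_(k < m) a k *: x (z k))).
    rewrite (linear_map_sum Q_lin); apply: eq_bigr => k _.
    by rewrite poly_actZ (linear_mapZ Q_lin) (QE k) poly_act_mulXsubC ?xP.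
  by rewrite sum0 (linear_map0 Q_lin).
have {}sum0 : \sum_(k < m) a k *: Qk k = 0.
  apply/eqP; apply: contraT => ne0.
  by rewrite (poly_act_inj phi_lin shift_inj ne0 act0) eqxx in v0_nz.
move=> k; have := congr1 (horner^~ (z k)) sum0.
rewrite /= horner_sum horner0 (bigD1 k) //= big1 ?addr0 => [|j jk]; last first.
  rewrite hornerZ horner_prod (bigD1 k) 1?eq_sym //=.
  by rewrite hornerXsubC subrr mul0r mulr0.
rewrite hornerZ => /eqP; rewrite mulf_eq0 => /orP[/eqP // | /eqP Qk0]; exfalso.
move: Qk0; rewrite horner_prod; apply/eqP/prodf_neq0 => j jk.
by rewrite hornerXsubC subr_eq0 (inj_eq z_inj) eq_sym.
Qed.

Section Schur.
Variables (F : fieldType) (L V : lmodType F) (act : L -> V -> V) (A : L -> Prop).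
Hypotheses (V_simple : simple_over act A) (act_lin : forall g, linear_map (act g)).
Variable phi : V -> V.
Hypotheses (phi_lin : linear_map phi)
  (phi_comm : forall g v, A g -> phi (act g v) = act g (phi v)).

Lemma schur_lemma : (forall v, phi v = 0) \/
  (forall v, phi v = 0 -> v = 0) /\ (forall u, exists v, phi v = u).
Proof.
have ker_sub : subspace (fun v => phi v = 0).
  split; first exact: linear_map0 phi_lin.
  by move=> a u1 u2 /= h1 h2; rewrite phi_lin h1 h2 scaler0 addr0.
have ker_st : stable act A (fun v => phi v = 0).
  by move=> g v Ag /= h; rewrite phi_comm // h (linear_map0 (act_lin g)).
have im_sub : subspace (fun u => exists v, phi v = u).
  split; first by exists 0; exact: linear_map0 phi_lin.
  by move=> a _ _ [v1 <-] [v2 <-]; exists (a *: v1 + v2).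
have im_st : stable act A (fun u => exists v, phi v = u).
  by move=> g _ Ag [v <-]; exists (act g v); rewrite phi_comm.
case: (V_simple.2 _ ker_sub ker_st) => [ker0|kerT]; last by left.
case: (V_simple.2 _ im_sub im_st) => [im0|imT]; last by right.
by left => v; apply: im0; exists v.
Qed.
End Schur.

Section Dixmier.
Variables (L V : lmodType CC) (act : L -> V -> V) (A : L -> Prop).
Hypotheses (V_simple : simple_over act A) (act_lin : forall g, linear_map (act g)).
Variable y : nat -> V.
Hypothesis y_span : forall v, nat_span y v.

(* Otherwise every phi - c would be invertible, and the vectors (phi - c)^-1 v0
   would form a free family indexed by the uncountable set C. *)
Theorem dixmier_lemma (phi : V -> V) : linear_map phi ->
    (forall g v, A g -> phi (act g v) = act g (phi v)) ->
  exists c : CC, forall v, phi v = c *: v.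
Proof.
move=> phi_lin phi_comm; apply: contrapT => not_scalar.
have shift_lin c : linear_map (fun v => phi v - c *: v).
  move=> a u1 u2; rewrite phi_lin scalerDr scalerA mulrC -scalerA scalerBr.
  by rewrite opprD addrACA.
have shift_comm c g v : A g -> phi (act g v) - c *: act g v = act g (phi v - c *: v).
  by move=> Ag; rewrite phi_comm // (linear_mapB (act_lin g)) (linear_mapZ (act_lin g)).
have shift_bij c : (forall v, phi v - c *: v = 0 -> v = 0) /\
                   (forall u, exists v, phi v - c *: v = u).
  case: (schur_lemma V_simple act_lin (shift_lin c) (shift_comm c)) => // shift0.
  by case: not_scalar; exists c => v; apply/eqP; rewrite -subr_eq0 shift0.
have [v0 v0_nz] := V_simple.1.
pose x c := proj1_sig (cid ((shift_bij c).2 v0)).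
have xP c : phi (x c) - c *: x c = v0 by exact: proj2_sig (cid ((shift_bij c).2 v0)).
apply: (no_real_indexed_lin_indep y_span (x := fun r => x (Complex r 0))) => s s_uniq.
apply: (resolvents_lin_indep phi_lin (fun c => (shift_bij c).1) v0_nz xP).
by move=> k1 k2 [] /eqP; rewrite nth_uniq // => /eqP; exact: val_inj.
Qed.
End Dixmier.

Section TupleCons.
Variable T : Type.

Definition tcons n (x : T) (u : 'I_n -> T) : 'I_n.+1 -> T :=
  fun j => if unlift ord0 j is Some i then u i else x.

Definition ttail n (w : 'I_n.+1 -> T) : 'I_n -> T := fun i => w (lift ord0 i).

Lemma tcons0 n x (u : 'I_n -> T) : tcons x u ord0 = x.
Proof. by rewrite /tcons unlift_none. Qed.

Lemma tconsS n x (u : 'I_n -> T) i : tcons x u (lift ord0 i) = u i.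
Proof. by rewrite /tcons liftK. Qed.

Lemma tcons_eta n (w : 'I_n.+1 -> T) : w = tcons (w ord0) (ttail w).
Proof. by apply: funext => j; rewrite /tcons; case: unliftP => [i ->|->]. Qed.
Lemma tcons_const n (x : T) : tcons x (fun _ : 'I_n => x) = fun _ => x.
Proof. by apply: funext => j; rewrite /tcons; case: unlift. Qed.
End TupleCons.

Lemma tcons_map (T1 T2 : Type) n (f : T1 -> T2) x (u : 'I_n -> T1) :
  (fun j => f (tcons x u j)) = tcons (f x) (fun i => f (u i)).
Proof. by apply: funext => j; rewrite /tcons; case: unlift. Qed.

Lemma tcons_map2 (T1 T2 T3 : Type) n (f : T1 -> T2 -> T3) x1 x2
    (u1 : 'I_n -> T1) (u2 : 'I_n -> T2) :
  (fun j => f (tcons x1 u1 j) (tcons x2 u2 j)) = tcons (f x1 x2) (fun i => f (u1 i) (u2 i)).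
Proof. by apply: funext => j; rewrite /tcons; case: unlift. Qed.

Section LinIndepCons.
Variables (F : fieldType) (V : lmodType F).

Lemma tcons_sum (I : Type) (r : seq I) n (x : I -> V) (u : I -> 'I_n -> V) :
  (fun j => \sum_(k <- r) tcons (x k) (u k) j) =
  tcons (\sum_(k <- r) x k) (fun i => \sum_(k <- r) u k i).
Proof. by apply: funext => j; rewrite /tcons; case: unlift. Qed.

Lemma lin_indep_tail n (v : 'I_n.+1 -> V) : lin_indep v -> lin_indep (ttail v).
Proof.
move=> v_indep c sum0 i; have := v_indep (tcons 0 c) _ (lift ord0 i); rewrite tconsS.
by apply; rewrite big_ord_recl tcons0 scale0r add0r; under eq_bigr do rewrite tconsS.
Qed.

Lemma lin_indep_head_notin_span n (v : 'I_n.+1 -> V) (c : 'I_n -> F) :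
  lin_indep v -> v ord0 != \sum_(i < n) c i *: ttail v i.
Proof.
move=> v_indep; apply/eqP => v0E.
suff : (-1 : F) = 0 by move/eqP; rewrite oppr_eq0 oner_eq0.
rewrite -(tcons0 (-1) c); apply: v_indep.
rewrite big_ord_recl tcons0 scaleN1r.
by under eq_bigr do rewrite tconsS; rewrite v0E addNr.
Qed.
End LinIndepCons.

Section Density.
Variables (F : fieldType) (L V : lmodType F) (act : L -> V -> V) (A : L -> Prop).
Hypotheses (V_simple : simple_over act A) (act_lin : forall g, linear_map (act g)).
Hypothesis commutant_scalar : forall phi : V -> V, linear_map phi ->
  (forall g v, A g -> phi (act g v) = act g (phi v)) -> exists c : F, forall v, phi v = c *: v.

Definition tuple_subspace n (M : ('I_n -> V) -> Prop) :=
  M (fun _ => 0) /\ forall a u u', M u -> M u' -> M (fun i => a *: u i + u' i).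

Definition tuple_stable n (M : ('I_n -> V) -> Prop) :=
  forall g u, A g -> M u -> M (fun i => act g (u i)).

Lemma tuple_subspaceD n (M : ('I_n -> V) -> Prop) u u' :
  tuple_subspace M -> M u -> M u' -> M (fun i => u i + u' i).
Proof.
move=> [_ M_lin] Mu Mu'; have := M_lin 1 u u' Mu Mu'.
by congr M; apply: funext => i; rewrite scale1r.
Qed.

Lemma tuple_subspace_sum n (M : ('I_n -> V) -> Prop) (I : Type) (r : seq I)
    (G : I -> 'I_n -> V) :
  tuple_subspace M -> (forall k, M (G k)) -> M (fun i => \sum_(k <- r) G k i).
Proof.
move=> M_sub MG; elim: r => [|k r IH].
  by have := M_sub.1; congr M; apply: funext => i; rewrite big_nil.
by have := tuple_subspaceD M_sub (MG k) IH; congr M; apply: funext => i; rewrite big_cons.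
Qed.

Section HeadTail.
Variables (n : nat) (M : ('I_n.+1 -> V) -> Prop).
Hypotheses (M_sub : tuple_subspace M) (M_st : tuple_stable M).

Definition tails (u : 'I_n -> V) := exists x, M (tcons x u).

Definition head_fiber (x : V) := M (tcons x (fun _ => 0)).

Lemma tails_subspace : tuple_subspace tails.
Proof.
split; first by exists 0; rewrite tcons_const; exact: M_sub.1.
move=> a u u' [x Mx] [x' Mx']; exists (a *: x + x').
by have := M_sub.2 a _ _ Mx Mx'; rewrite (tcons_map2 (fun p q => a *: p + q)).
Qed.

Lemma tails_stable : tuple_stable tails.
Proof.
move=> g u Ag [x Mx]; exists (act g x).
by have := (@M_st g _ Ag) Mx; rewrite (tcons_map (act g)).
Qed.

Lemma head_fiber_subspace : subspace head_fiber.
Proof.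
split; first by rewrite /head_fiber tcons_const; exact: M_sub.1.
move=> a x x' Mx Mx'; have := M_sub.2 a _ _ Mx Mx'; rewrite /head_fiber; congr M.
rewrite (tcons_map2 (fun p q => a *: p + q)); congr tcons.
by apply: funext => i; rewrite scaler0 addr0.
Qed.

Lemma head_fiber_stable : stable act A head_fiber.
Proof.
move=> g x Ag Mx; have := (@M_st g _ Ag) Mx; rewrite /head_fiber; congr M.
rewrite (tcons_map (act g)); congr tcons.
by apply: funext => i; rewrite (linear_map0 (act_lin g)).
Qed.

Lemma head_fiberB x1 x2 u : M (tcons x1 u) -> M (tcons x2 u) -> head_fiber (x1 - x2).
Proof.
move=> Mx1 Mx2; have := M_sub.2 (-1) _ _ Mx2 Mx1; rewrite /head_fiber; congr M.
rewrite (tcons_map2 (fun p q => -1 *: p + q)) scaleN1r addrC; congr tcons.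
by apply: funext => i; rewrite scaleN1r addNr.
Qed.

(* Over a trivial head fiber M is the graph of a map on tails; restricted to
   each coordinate it commutes with A, hence is a scalar. *)
Lemma graph_lin_comb : (forall x, head_fiber x -> x = 0) -> (forall u, tails u) ->
  exists c : 'I_n -> F, forall u x, M (tcons x u) -> x = \sum_(i < n) c i *: u i.
Proof.
move=> fiber0 all_tails.
have graph_unique x1 x2 u : M (tcons x1 u) -> M (tcons x2 u) -> x1 = x2.
  by move=> h1 h2; apply/eqP; rewrite -subr_eq0; apply/eqP/fiber0/(head_fiberB h1 h2).
pose e i (y : V) := fun j : 'I_n => if j == i then y else 0.
pose f i y := proj1_sig (cid (all_tails (e i y))).
have fP i y : M (tcons (f i y) (e i y)) by exact: proj2_sig (cid (all_tails (e i y))).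
have f_scalar i : exists c : F, forall y, f i y = c *: y.
  apply: commutant_scalar => [a y1 y2|g y Ag].
    apply: (graph_unique _ _ (e i (a *: y1 + y2))); first exact: fP.
    have := M_sub.2 a _ _ (fP i y1) (fP i y2); congr M.
    rewrite (tcons_map2 (fun p q => a *: p + q)); congr tcons.
    by apply: funext => j; rewrite /e; case: ifP => _ //; rewrite scaler0 addr0.
  apply: (graph_unique _ _ (e i (act g y))); first exact: fP.
  have := (@M_st g _ Ag) (fP i y); congr M.
  rewrite (tcons_map (act g)); congr tcons.
  by apply: funext => j; rewrite /e; case: ifP => _ //; rewrite (linear_map0 (act_lin g)).
pose c i := proj1_sig (cid (f_scalar i)).
have cP i : forall y, f i y = c i *: y by exact: proj2_sig (cid (f_scalar i)).
exists c => u x Mx; apply: (graph_unique _ _ u Mx).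
have := tuple_subspace_sum (enum 'I_n) (G := fun k => tcons (f k (u k)) (e k (u k)))
  M_sub (fun k => fP k (u k)).
rewrite tcons_sum; congr (M (tcons _ _)).
  by rewrite big_enum; apply: eq_bigr => i _; rewrite cP.
apply: funext => j; rewrite big_enum (bigD1 j) //= big1 => [|i ij].
  by rewrite /e eqxx addr0.
by rewrite /e eq_sym (negbTE ij).
Qed.
End HeadTail.

Theorem density n (v : 'I_n -> V) : lin_indep v ->
  forall M, tuple_subspace M -> tuple_stable M -> M v -> forall u, M u.
Proof.
elim: n v => [|n IH] v v_indep M M_sub M_st Mv.
  by move=> u; have -> : u = v by apply: funext => -[].
have all_tails : forall u, tails M u.
  apply: IH (lin_indep_tail v_indep) _ (tails_subspace M_sub) (tails_stable M_st) _.
  by exists (v ord0); rewrite -tcons_eta.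
have [fiber0|fiberT] := V_simple.2 _ (head_fiber_subspace M_sub) (head_fiber_stable M_st).
  have [c graph] := graph_lin_comb M_sub M_st fiber0 all_tails.
  have v0E : v ord0 = \sum_(i < n) c i *: ttail v i by apply: graph; rewrite -tcons_eta.
  by have := lin_indep_head_notin_span c v_indep; rewrite v0E eqxx.
move=> u; have [x Mx] := all_tails (ttail u).
have := tuple_subspaceD M_sub Mx (fiberT (u ord0 - x)); congr M.
rewrite (tcons_map2 (fun p q => p + q)) [RHS]tcons_eta addrC subrK; congr tcons.
by apply: funext => i; rewrite addr0.
Qed.
End Density.

(* A simple module is spanned by the countably many vectors e_i1 (... (e_ik v0)),
   where e is a countable basis of L and v0 != 0. *)
Lemma simple_countably_spanned (F : fieldType) (L V : lmodType F) (act : L -> V -> V) :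
  simple_module act -> (forall g, linear_map (act g)) ->
  (forall v, linear_map (act^~ v)) -> has_countable_basis L ->
  exists y : nat -> V, forall v, nat_span y v.
Proof.
move=> [[v0 v0_nz] V_simple] act_lin act_lin_l [I [e [_ e_span]]].
pose word (s : seq I) := foldr (fun i v => act (e i) v) v0 s.
pose y (n : nat) := if unpickle n is Some s then word s else 0.
exists y.
have span_act g n : nat_span y (act g (y n)).
  rewrite /y; case: (unpickle n) => [s|]; last first.
    by exists [::]; rewrite big_nil (linear_map0 (act_lin g)).
  have [sL [c ->]] := e_span g.
  exists [seq (c i, pickle (i :: s)) | i <- sL].
  rewrite big_map /lincomb (linear_map_sum (act_lin_l (word s))).
  by apply: eq_bigr => i _; rewrite /y pickleK (linear_mapZ (act_lin_l _)).
have span_st : stable act (fun _ => True) (nat_span y).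
  move=> g _ _ [l ->]; rewrite (linear_map_sum (act_lin g)).
  apply: (subspace_sum (nat_span_subspace y)) => p _.
  by rewrite (linear_mapZ (act_lin g)); apply: (subspaceZ (nat_span_subspace y)).
case: (V_simple _ (nat_span_subspace y) span_st) => [span0|//].
have /span0 v00 : nat_span y v0.
  by exists [:: (1, pickle (@nil I))]; rewrite big_seq1 /= /y pickleK scale1r.
by rewrite v00 eqxx in v0_nz.
Qed.

Lemma ann_sum_simple_over (F : fieldType) (L V1 V2 : lmodType F)
    (act1 : L -> V1 -> V1) (act2 : L -> V2 -> V2) :
  (forall v, linear_map (act1^~ v)) -> simple_module act1 ->
  (forall v S x, exists a b, ann act1 v a /\ ann_set act2 S b /\ x = a + b) ->
  forall S, simple_over act1 (ann_set act2 S).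
Proof.
move=> act1_lin_l [V1_nz V1_simple] ann_sum S; split => // W W_sub W_st.
apply: V1_simple => // g v _ Wv; have [a [b [av [bS ->]]]] := ann_sum v S g.
by rewrite (linear_mapD (act1_lin_l v)) av add0r; apply: W_st.
Qed.

Section TensorProduct.
Variables (F : fieldType) (V1 V2 T : lmodType F) (tens : V1 -> V2 -> T).
Hypothesis tens_univ : is_tensor_product tens.

Lemma tensor_linear_l w : linear_map (tens^~ w).
Proof. by move=> a u1 u2; rewrite tens_univ.1.1. Qed.

Lemma tensor_linear_r v : linear_map (tens v).
Proof. by move=> a u1 u2; rewrite tens_univ.1.2. Qed.

(* A functional vanishing on all pure tensors vanishes, by uniqueness in the
   universal property; so a tensor outside their span would be separated. *)
Lemma tensor_pure_span t : exists s : seq (V1 * V2), t = \sum_(p <- s) tens p.1 p.2.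
Proof.
pose pure_span t := exists s : seq (V1 * V2), t = \sum_(p <- s) tens p.1 p.2.
apply: contrapT => t_out.
have span_sub : subspace pure_span.
  split; first by exists [::]; rewrite big_nil.
  move=> a _ _ [l1 ->] [l2 ->]; exists ([seq (a *: p.1, p.2) | p <- l1] ++ l2).
  rewrite big_cat big_map scaler_sumr; congr (_ + _).
  by apply: eq_bigr => p _; rewrite (linear_mapZ (tensor_linear_l _)).
have [phi [phi_lin phi_span phi_t]] := separating_functional span_sub t_out.
have zero_bil : bilinear_map (fun (_ : V1) (_ : V2) => (0 : F^o)).
  by split => *; rewrite scaler0 addr0.
have zero_lin : linear_map (fun _ : T => (0 : F^o)) by move=> *; rewrite scaler0 addr0.
have phi_pure v w : phi (tens v w) = 0.
  by apply: phi_span; exists [:: (v, w)]; rewrite big_seq1.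
have /eqP := (tens_univ.2 _ _ zero_bil).2 phi _ phi_lin zero_lin phi_pure t.
by rewrite phi_t oner_eq0.
Qed.

Lemma tensor_pure_neq0 v w : v != 0 -> w != 0 -> tens v w != 0.
Proof.
move=> v_nz w_nz.
have zero_sub : subspace (fun w : V2 => w = 0).
  by split => // a _ _ -> ->; rewrite scaler0 addr0.
have [phi [phi_lin _ phi_w]] := separating_functional zero_sub (elimN eqP w_nz).
pose b (v : V1) (w : V2) := (phi w : F) *: v.
have b_bil : bilinear_map b.
  split => a.
    by move=> u1 u2 w'; rewrite /b scalerDr scalerA mulrC -scalerA.
  by move=> u w1 w2; rewrite /b phi_lin scalerDl -scalerA.
have [[f [f_lin fE]] _] := tens_univ.2 _ b b_bil.
apply: contraNneq v_nz => vw0.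
by have := fE v w; rewrite vw0 (linear_map0 f_lin) /b phi_w scale1r => <-.
Qed.

Lemma tensor_sum_lin_indep n (v : 'I_n -> V1) (w : 'I_n -> V2) :
  exists m (v' : 'I_m -> V1) (w' : 'I_m -> V2), lin_indep v' /\
    \sum_(i < n) tens (v i) (w i) = \sum_(i < m) tens (v' i) (w' i).
Proof.
elim: n v w => [|n IH] v w; first by exists 0%N, v, w; split => // c _ [].
have [v_indep|v_dep] := pselect (lin_indep v); first by exists n.+1, v, w.
have [c [c_rel [k ck]]] : exists c : 'I_n.+1 -> F,
    \sum_(i < n.+1) c i *: v i = 0 /\ exists k, c k != 0.
  apply: contrapT => h; apply: v_dep => c c_rel i; apply: contrapT => ci; apply: h.
  by exists c; split => //; exists i; apply/eqP.
pose v2 (j : 'I_n) := v (lift k j).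
pose w2 (j : 'I_n) := w (lift k j) - (c (lift k j) / c k) *: w k.
have [m [v' [w' [v'_indep sumE]]]] := IH v2 w2.
exists m, v', w'; split => //; rewrite -sumE.
have vk : \sum_(j < n) (c (lift k j) / c k) *: v2 j = - v k.
  move: c_rel; rewrite (bigD1_ord k) //= => /eqP; rewrite addrC addr_eq0 => /eqP c_rel.
  under eq_bigr do rewrite mulrC -scalerA.
  by rewrite -scaler_sumr c_rel scalerN scalerA mulVf // scale1r.
rewrite (bigD1_ord k) //=.
transitivity (tens (v k) (w k) + \sum_(j < n) tens (v2 j) (w (lift k j))) => //.
rewrite /w2; under [RHS]eq_bigr do rewrite (linear_mapB (tensor_linear_r _)).
under [RHS]eq_bigr do rewrite (linear_mapZ (tensor_linear_r _)).
rewrite sumrB; under [X in _ = _ - X]eq_bigr do rewrite -(linear_mapZ (tensor_linear_l _)).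
by rewrite -(linear_map_sum (tensor_linear_l _)) vk (linear_mapN (tensor_linear_l _)) opprK addrC.
Qed.

Lemma tensor_lin_indep_form t : exists m (v : 'I_m -> V1) (w : 'I_m -> V2),
  lin_indep v /\ t = \sum_(i < m) tens (v i) (w i).
Proof.
have [s ->] := tensor_pure_span t.
have [m [v [w [v_indep sumE]]]] := tensor_sum_lin_indep
  (fun i : 'I_(size s) => (s`_i).1) (fun i => (s`_i).2).
by exists m, v, w; split => //; rewrite -sumE (big_nth (0, 0)) big_mkord.
Qed.
End TensorProduct.

Section TensorModule.
Variables (F : fieldType) (L V1 V2 T : lmodType F).
Variables (act1 : L -> V1 -> V1) (act2 : L -> V2 -> V2).
Variables (tens : V1 -> V2 -> T) (actT : L -> T -> T).
Hypotheses (tens_univ : is_tensor_product tens)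
  (actT_tens : tensor_action act1 act2 tens actT).

Definition tensor_factor (W : T -> Prop) (w : V2) := forall v, W (tens v w).

Lemma tensor_factor_submodule W : submodule actT W -> submodule act2 (tensor_factor W).
Proof.
move=> [W_sub W_st]; split.
  split=> [v|a w w' Ww Ww' v].
    by rewrite (linear_map0 (tensor_linear_r tens_univ v)); exact: subspace0.
  by rewrite (tensor_linear_r tens_univ v); exact: W_sub.2.
move=> g w _ Ww v.
have -> : tens v (act2 g w) = actT g (tens v w) - tens (act1 g v) w.
  by rewrite actT_tens.2 addrC addKr.
by apply: (subspaceB W_sub); [exact: W_st | exact: Ww].
Qed.

Hypothesis act1_lin : forall g, linear_map (act1 g).
Hypothesis V1_simple_ann : forall S, simple_over act1 (ann_set act2 S).
Hypothesis commutant_scalar : forall S (phi : V1 -> V1), linear_map phi ->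
  (forall g v, ann_set act2 S g -> phi (act1 g v) = act1 g (phi v)) ->
  exists c : F, forall v, phi v = c *: v.

(* With S = {w_i}, ann(S) acts on sum_i u_i (x) w_i through the u_i only, so
   density applies to the tuples u with sum_i u_i (x) w_i in W. *)
Lemma tensor_submodule_factor W m (v : 'I_m -> V1) (w : 'I_m -> V2) :
  submodule actT W -> lin_indep v -> W (\sum_(i < m) tens (v i) (w i)) ->
  forall i, tensor_factor W (w i).
Proof.
move=> [W_sub W_st] v_indep Wv.
pose S := [seq w i | i <- enum 'I_m].
pose M (u : 'I_m -> V1) := W (\sum_(i < m) tens (u i) (w i)).
have M_sub : tuple_subspace M.
  split.
    rewrite /M; under eq_bigr do rewrite (linear_map0 (tensor_linear_l tens_univ _)).
    by rewrite big1 //; exact: subspace0.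
  move=> a u u' Mu Mu'; rewrite /M; under eq_bigr do rewrite (tensor_linear_l tens_univ).
  by rewrite big_split -scaler_sumr; apply: W_sub.2.
have M_st : tuple_stable act1 (ann_set act2 S) M.
  move=> g u gS Mu; have := W_st g _ I Mu; rewrite (linear_map_sum (actT_tens.1 g)).
  congr W; apply: eq_bigr => i _; rewrite actT_tens.2 gS ?map_f ?mem_enum //.
  by rewrite (linear_map0 (tensor_linear_r tens_univ _)) addr0.
have M_all := density (V1_simple_ann S) act1_lin (commutant_scalar (S:=S)) v_indep M_sub M_st Wv.
move=> i u; have := M_all (fun j => if j == i then u else 0).
rewrite /M (bigD1 i) //= eqxx big1 ?addr0 // => j ji.
by rewrite (negbTE ji) (linear_map0 (tensor_linear_l tens_univ _)).
Qed.

Lemma tensor_submodule_eq W : submodule actT W ->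
  forall t, W t <-> tensor_sub tens (tensor_factor W) t.
Proof.
move=> W_mod t; split=> [Wt|[s [s_fac ->]]]; last first.
  by rewrite big_seq; apply: (subspace_sum W_mod.1) => p ps; exact: s_fac.
have [m [v [w [v_indep tE]]]] := tensor_lin_indep_form tens_univ t.
exists [seq (v i, w i) | i <- enum 'I_m]; split; last by rewrite tE big_map big_enum.
by move=> _ /mapP [i _ ->]; apply: (tensor_submodule_factor W_mod v_indep); rewrite -tE.
Qed.

Lemma tensor_simple : simple_module act1 -> simple_module act2 -> simple_module actT.
Proof.
move=> [[v v_nz] _] [[w w_nz] V2_simple]; split.
  by exists (tens v w); exact: tensor_pure_neq0.
move=> W W_sub W_st; have W_mod : submodule actT W by [].
have [fac_sub fac_st] := tensor_factor_submodule W_mod.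
have [fac0|facT] := V2_simple _ fac_sub (fun g w _ => fac_st g w I).
  left => t /(tensor_submodule_eq W_mod) [s [s_fac ->]].
  by apply: big1_seq => p /s_fac /fac0 ->; exact: linear_map0 (tensor_linear_r tens_univ _).
right => t; apply/(tensor_submodule_eq W_mod).
by have [s ->] := tensor_pure_span tens_univ t; exists s; split => // p _; exact: facT.
Qed.
End TensorModule.

Theorem theorem7
  (L : lmodType CC) (br : L -> L -> L)
  (hL : lie_bracket br) (hcount : has_countable_basis L)
  (V1 : lmodType CC) (act1 : L -> V1 -> V1) (h1 : lie_module br act1)
  (V2 : lmodType CC) (act2 : L -> V2 -> V2) (h2 : lie_module br act2)
  (T : lmodType CC) (tens : V1 -> V2 -> T) (hT : is_tensor_product tens)
  (actT : L -> T -> T) (hactT : tensor_action act1 act2 tens actT) :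
  ((simple_module act1 /\
     (forall (v : V1) (S : seq V2) (x : L),
        exists a b : L, ann act1 v a /\ ann_set act2 S b /\ x = a + b))
   \/ (forall S : seq V2, simple_over act1 (ann_set act2 S))) ->
  (forall W : T -> Prop, submodule actT W ->
     exists V2' : V2 -> Prop, submodule act2 V2' /\
       forall t, W t <-> tensor_sub tens V2' t)
  /\ (simple_module act1 -> simple_module act2 -> simple_module actT).
Proof.
move=> hyp.
have act1_lin := lie_module_linear h1.
have act1_lin_l := lie_module_linear_l h1.
have V1_simple_ann : forall S, simple_over act1 (ann_set act2 S).
  by case: hyp => [[V1_simple ann_sum]|//]; exact: ann_sum_simple_over.
have [y y_span] : exists y : nat -> V1, forall v, nat_span y v.
  apply: simple_countably_spanned act1_lin act1_lin_l hcount.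
  exact: simple_over_sub (V1_simple_ann [::]).
have commutant_scalar S := dixmier_lemma (V1_simple_ann S) act1_lin y_span.
split=> [W W_mod|].
  exists (tensor_factor tens W); split; first exact (tensor_factor_submodule hT hactT W_mod).
  exact (tensor_submodule_eq hT hactT act1_lin V1_simple_ann commutant_scalar W_mod).
exact (tensor_simple hT hactT act1_lin V1_simple_ann commutant_scalar).
Qed.
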